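(* Let $\mathcal{A}$ be an additive category, $X$ an object of $\mathcal{A}$ with an action of a finite group $G$, and $H\subset G$ a subgroup such that the index $|G|/|H|$ is invertible in all Hom-groups of $\mathcal{A}$. Assume that the categorical quotients $X/L$ exist for all subgroups $L\subset G$. Then the fork diagram $$\partial_0,\partial_1:\bigoplus_{g\in G}X/(H\cap g^{-1}Hg)\rightrightarrows X/H\xrightarrow{e}X/G,$$ with $\partial_0=\bigoplus_{g}p_{H\cap g^{-1}Hg,H}$, $\partial_1=\bigoplus_gp_{H\cap g^{-1}Hg,H,g}$ and $e=p_{H,G}$, is a split fork diagram; in particular it is an absolute coequalizer diagram.
   Context: For $g\in G$, $[g]:X\to X$ denotes the corresponding automorphism, and for a subgroup $L$, $p_L:X\to X/L$ is the projection to the categorical quotient (the universal $L$-invariant morphism out of $X$). For subgroups $L,M\subset G$ and $g\in G$ with $gLg^{-1}\subset M$, $p_{L,M,g}:X/L\to X/M$ is the unique morphism with $p_{L,M,g}\circ p_L=p_M\circ[g]$; $p_{L,M}=p_{L,M,1}$. A fork $\partial_0,\partial_1:A\rightrightarrows B\xrightarrow{e}Z$ is split if $e\partial_0=e\partial_1$ and there exist $s:Z\to B$ and $t:B\to A$ with $es=\mathrm{Id}_Z$, $\partial_0t=\mathrm{Id}_B$, $\partial_1t=se$ (Mac Lane). *)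

From HB Require Import structures.
From mathcomp Require Import all_boot all_order all_algebra all_fingroup.
Set Implicit Arguments. Unset Strict Implicit. Unset Printing Implicit Defensive.
Import GRing.Theory.
Local Open Scope ring_scope.

Record AddCat := {
  Obj :> Type;
  Mor : Obj -> Obj -> zmodType;
  idm : forall A : Obj, Mor A A;
  comp : forall A B C : Obj, Mor B C -> Mor A B -> Mor A C;
  compA : forall A B C D (f : Mor C D) (g : Mor B C) (h : Mor A B),
      comp f (comp g h) = comp (comp f g) h;
  comp1m : forall A B (f : Mor A B), comp (idm B) f = f;
  compm1 : forall A B (f : Mor A B), comp f (idm A) = f;
  compDl : forall A B C (f f' : Mor B C) (g : Mor A B),
      comp (f + f') g = comp f g + comp f' g;
  compDr : forall A B C (f : Mor B C) (g g' : Mor A B),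
      comp f (g + g') = comp f g + comp f g';
  zobj : Obj;
  zobj_init : forall A (f : Mor zobj A), f = 0;
  zobj_term : forall A (f : Mor A zobj), f = 0;
  biprod2 : forall A B : Obj, exists (S : Obj) (i1 : Mor A S) (i2 : Mor B S)
      (p1 : Mor S A) (p2 : Mor S B),
      [/\ comp p1 i1 = idm A, comp p2 i2 = idm B, comp p1 i2 = 0,
          comp p2 i1 = 0 & comp i1 p1 + comp i2 p2 = idm S]
}.

Arguments Mor {a} : rename.
Arguments idm {a} _ : rename.
Arguments comp {a A B C} : rename.
Notation "f \oc g" := (comp f g) (at level 40, left associativity).

Section Defs.
Variables (C : AddCat) (gT : finGroupType).

Definition is_cat_action (X : C) (act : gT -> Mor X X) :=
  act 1%g = idm X /\ forall g h, act (g * h)%g = act g \oc act h.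

Definition cat_invariant (X Y : C) (act : gT -> Mor X X) (L : {set gT})
    (f : Mor X Y) := forall l, l \in L -> f \oc act l = f.

Definition is_cat_quotient (X Q : C) (act : gT -> Mor X X) (L : {set gT})
    (p : Mor X Q) :=
  cat_invariant act L p /\
  forall (Y : C) (f : Mor X Y), cat_invariant act L f ->
    exists! u : Mor Q Y, u \oc p = f.

Definition is_biproduct (I : finType) (F : I -> C) (S : C)
    (inj : forall i, Mor (F i) S) (pr : forall i, Mor S (F i)) :=
  [/\ forall i, pr i \oc inj i = idm (F i),
      forall i j, i != j -> pr j \oc inj i = 0
    & \sum_(i : I) (inj i \oc pr i) = idm S].
End Defs.

Definition split_fork (C : AddCat) (A B Z : C) (d0 d1 : Mor A B) (e : Mor B Z) :=
  e \oc d0 = e \oc d1 /\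
  exists (s : Mor Z B) (t : Mor B A),
    [/\ e \oc s = idm Z, d0 \oc t = idm B & d1 \oc t = s \oc e].

From Pilot Require Import Defs.
From HB Require Import structures.
From mathcomp Require Import all_boot all_order all_algebra all_fingroup.
Set Implicit Arguments. Unset Strict Implicit. Unset Printing Implicit Defensive.
Import GRing.Theory Num.Theory.
Local Open Scope ring_scope.

(* Let n = |G : H|.  The sum of p_H o [x] over representatives x of G/H is
   G-invariant, so it factors through p_G; dividing by n gives the section s,
   and e o s = 1 because every summand becomes p_G.  For t, use the Mackey
   decomposition: for g running over representatives of the double cosets
   HgH, the cosets H g c with c in (H :&: H^g)\H run exactly once over G/H.
   Hence sum_g sum_c inj_g o p_(H :&: H^g) o [c] is H-invariant and divided by
   n factors as t o p_H; composing with d0 counts G/H once (d0 t = 1), while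
   composing with d1 reproduces the sum defining s (d1 t = s e). *)

Section Cosets.
Variable gT : finGroupType.
Implicit Types (L K H : {group gT}) (x y z : gT).
Local Open Scope group_scope.

Lemma rcosets_repr L (A : {set gT}) c : c \in rcosets L A -> c = L :* repr c.
Proof. by case/rcosetsP=> x _ ->; rewrite rcoset_repr. Qed.

Lemma repr_rcosets_in L K c : L \subset K -> c \in rcosets L K -> repr c \in K.
Proof.
move=> sLK /rcosetsP[x xK ->]; case: repr_rcosetP => l lL.
by rewrite groupM // (subsetP sLK).
Qed.

Lemma repr_rcoset_eq (V : Type) L (F : gT -> V) y :
  (forall l x, l \in L -> F (l * x) = F x) -> F (repr (L :* y)) = F y.
Proof. by move=> FL; case: repr_rcosetP => l /FL. Qed.

Lemma sum_rcosets_mulr (V : zmodType) L K (F : gT -> V) k :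
    (forall l x, l \in L -> F (l * x) = F x) -> k \in K ->
  \sum_(c in rcosets L K) F (repr c * k)%g = \sum_(c in rcosets L K) F (repr c).
Proof.
move=> FL kK; rewrite [RHS](reindex_acts 'Rs (actsRs_rcosets L K) kK).
apply: eq_bigr => c cLK /=.
by rewrite {2}(rcosets_repr cLK) rcosetE -rcosetM repr_rcoset_eq.
Qed.

Lemma rcosetI_conjg_eq H g a b : a \in H -> b \in H ->
  ((H :&: H :^ g) :* a == (H :&: H :^ g) :* b) = (H :* (g * a) == H :* (g * b)).
Proof.
move=> aH bH; apply/eqP/eqP => /rcoset_eqP; rewrite mem_rcoset => ab; apply/rcoset_eqP;
  rewrite mem_rcoset.
  move: ab; rewrite inE => /andP[_]; rewrite mem_conjg conjgE invgK.
  by rewrite invMg !mulgA.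
by rewrite inE groupM ?groupV //= mem_conjg conjgE invgK -!mulgA -invMg !mulgA.
Qed.

Definition dcoset (A : {set gT}) x := A :* x * A.
Definition dcoset_repr (A : {set gT}) x := repr (dcoset A x).
Definition dcoset_reprs (A : {set gT}) := dcoset_repr A @: [set: gT].

Lemma dcosetP H x y :
  reflect (exists h1, exists2 h2, h1 \in H /\ h2 \in H & y = h1 * x * h2)
          (y \in dcoset H x).
Proof.
apply: (iffP mulsgP) => [[a h2 /rcosetP[h1 h1H ->] h2H ->] | [h1 [h2 [h1H h2H ->]]]].
  by exists h1, h2.
by exists (h1 * x) h2; rewrite ?mem_rcoset ?mulgK.
Qed.

Lemma dcoset_refl H x : x \in dcoset H x.
Proof. by apply/dcosetP; exists 1, 1; rewrite ?mulg1 ?mul1g. Qed.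

Lemma dcoset_eq H x y : y \in dcoset H x -> dcoset H y = dcoset H x.
Proof.
case/dcosetP=> h1 [h2 [h1H h2H ->]]; apply/setP=> z; apply/dcosetP/dcosetP.
  case=> a [b [aH bH ->]]; exists (a * h1), (h2 * b); rewrite ?groupM ?mulgA //.
case=> a [b [aH bH ->]]; exists (a * h1^-1), (h2^-1 * b); rewrite ?groupM ?groupV //.
by rewrite !mulgA mulgK mulgKV.
Qed.

Lemma mem_dcoset_repr H x : dcoset_repr H x \in dcoset H x.
Proof. exact: mem_repr (dcoset_refl H x). Qed.

Lemma dcoset_reprs_eq H g g' :
  g \in dcoset_reprs H -> g' \in dcoset_reprs H -> g \in dcoset H g' -> g = g'.
Proof.
move=> /imsetP[x _ ->] /imsetP[x' _ ->] /dcoset_eq.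
by rewrite !(dcoset_eq (mem_dcoset_repr _ _)) /dcoset_repr => ->.
Qed.

Section Mackey.
Variable H : {group gT}.

Definition mackey_pairs :=
  [set u : gT * {set gT} | (u.1 \in dcoset_reprs H)
                           && (u.2 \in rcosets (H :&: H :^ u.1) H)].

Definition mackey_map (u : gT * {set gT}) : {set gT} := H :* (u.1 * repr u.2).

Lemma mem_mackey_pairs g c : (g, c) \in mackey_pairs ->
  [/\ g \in dcoset_reprs H, c = (H :&: H :^ g) :* repr c & repr c \in H].
Proof.
rewrite inE /= => /andP[gR cHg]; split=> //; first exact: rcosets_repr cHg.
exact: repr_rcosets_in (subsetIl _ _) cHg.
Qed.

Lemma mackey_map_inj : {in mackey_pairs &, injective mackey_map}.
Proof.
move=> [g c] [g' c'] /mem_mackey_pairs[gR cE cH] /mem_mackey_pairs[g'R c'E c'H].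
rewrite /mackey_map /= => Egc.
have gg' : g = g'.
  apply: (dcoset_reprs_eq gR g'R).
  have /rcosetP[h hH ghc] : g * repr c \in H :* (g' * repr c') by rewrite -Egc rcoset_refl.
  apply/dcosetP; exists h, (repr c' * (repr c)^-1); rewrite ?groupM ?groupV //.
  by rewrite !mulgA -(mulgA h) -ghc mulgK.
subst g'; congr (_, _); rewrite cE c'E; apply/eqP.
by rewrite (rcosetI_conjg_eq _ cH c'H) Egc.
Qed.

Lemma mackey_map_onto : mackey_map @: mackey_pairs = rcosets H [set: gT].
Proof.
apply/setP => Hy; apply/imsetP/idP => [[[g c] _ ->] | /rcosetsP[y _ ->]].
  by apply/rcosetsP; exists (g * repr c); rewrite ?inE.
pose g := dcoset_repr H y.
have /dcosetP[h1 [h2 [h1H h2H yE]]] : y \in dcoset H g.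
  by rewrite (dcoset_eq (mem_dcoset_repr H y)) dcoset_refl.
exists (g, (H :&: H :^ g) :* h2).
  by rewrite inE /= imset_f ?inE //=; apply/rcosetsP; exists h2.
have reprH : repr ((H :&: H :^ g) :* h2) \in H.
  by apply: (repr_rcosets_in (subsetIl _ _)); apply/rcosetsP; exists h2.
rewrite /mackey_map /= yE -mulgA rcosetM (rcoset_id h1H).
by apply/esym/eqP; rewrite -(rcosetI_conjg_eq _ reprH h2H) rcoset_repr.
Qed.

Lemma sum_mackey (V : zmodType) (F : gT -> V) :
    (forall h x, h \in H -> F (h * x) = F x) ->
  \sum_(g in dcoset_reprs H) \sum_(c in rcosets (H :&: H :^ g) H) F (g * repr c)%g
  = \sum_(c in rcosets H [set: gT]) F (repr c).
Proof.
move=> FH; rewrite pair_big_dep /= -mackey_map_onto big_imset /=; last first.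
  by move=> u v uP vP; apply: mackey_map_inj; rewrite -?topredE.
by apply: eq_big => [u | u _]; rewrite ?inE // repr_rcoset_eq.
Qed.

Lemma sum_indexg_dcoset_reprs :
  (\sum_(g in dcoset_reprs H) #|H : H :&: H :^ g|)%N = #|[set: gT] : H|.
Proof.
have := sum_mackey (F := fun _ => 1 : int) (fun _ _ _ => erefl).
rewrite sumr_const (eq_bigr _ (fun g _ => sumr_const _ _)).
by rewrite -natr_sum => /eqP; rewrite eqr_nat => /eqP.
Qed.

End Mackey.
End Cosets.

Section AdditiveCategory.
Variable C : AddCat.
Implicit Types A B D : C.

Lemma comp0m A B D (g : Mor A B) : (0 : Mor B D) \oc g = 0.
Proof. by apply: (addrI (0 \oc g)); rewrite -compDl !addr0. Qed.

Lemma compm0 A B D (f : Mor B D) : f \oc (0 : Mor A B) = 0.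
Proof. by apply: (addrI (f \oc 0)); rewrite -compDr !addr0. Qed.

Lemma comp_suml A B D (I : Type) (r : seq I) (P : pred I) (F : I -> Mor B D)
    (g : Mor A B) :
  (\sum_(i <- r | P i) F i) \oc g = \sum_(i <- r | P i) (F i \oc g).
Proof. by elim/big_rec2: _ => [|i x y _ <-]; rewrite ?comp0m ?compDl. Qed.

Lemma comp_sumr A B D (I : Type) (r : seq I) (P : pred I) (F : I -> Mor A B)
    (f : Mor B D) :
  f \oc (\sum_(i <- r | P i) F i) = \sum_(i <- r | P i) (f \oc F i).
Proof. by elim/big_rec2: _ => [|i x y _ <-]; rewrite ?compm0 ?compDr. Qed.

Lemma compMnl A B D (f : Mor B D) (g : Mor A B) k : (f *+ k) \oc g = (f \oc g) *+ k.
Proof. by elim: k => [|k IH]; rewrite ?comp0m // !mulrS compDl IH. Qed.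

Lemma compMnr A B D (f : Mor B D) (g : Mor A B) k : f \oc (g *+ k) = (f \oc g) *+ k.
Proof. by elim: k => [|k IH]; rewrite ?compm0 // !mulrS compDr IH. Qed.

End AdditiveCategory.

Section CategoricalQuotients.
Variables (C : AddCat) (gT : finGroupType) (X : C) (act : gT -> Mor X X).
Implicit Types (L K : {group gT}) (Q Y : C).

Lemma cat_invariant_comp (L : {set gT}) Y Y' (u : Mor Y Y') (f : Mor X Y) :
  cat_invariant act L f -> cat_invariant act L (u \oc f).
Proof. by move=> fL l lL; rewrite -Defs.compA fL. Qed.

Lemma cat_invariant_sum (L : {set gT}) Y (I : Type) (r : seq I) (P : pred I)
    (F : I -> Mor X Y) :
  (forall i, P i -> cat_invariant act L (F i)) ->
  cat_invariant act L (\sum_(i <- r | P i) F i).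
Proof. by move=> FL l lL; rewrite comp_suml; apply: eq_bigr => i /FL->. Qed.

Lemma cat_quotient_epi (L : {set gT}) Q Y (p : Mor X Q) (u v : Mor Q Y) :
  is_cat_quotient act L p -> u \oc p = v \oc p -> u = v.
Proof.
case=> pL univ Epq; have [w [_ wU]] := univ _ _ (cat_invariant_comp v pL).
by rewrite -(wU u Epq) (wU v erefl).
Qed.

Lemma cat_quotient_eq_mulrn (L : {set gT}) Q Y (p : Mor X Q) n (u v : Mor Q Y) :
    is_cat_quotient act L p -> injective (fun w : Mor Q Y => w *+ n) ->
  (u \oc p) *+ n = (v \oc p) *+ n -> u = v.
Proof. by move=> pQ nI; rewrite -!compMnl => /(cat_quotient_epi pQ)/nI. Qed.

Lemma cat_quotient_lift_mulrn (L : {set gT}) Q Y (p : Mor X Q) n (f : Mor X Y) :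
    is_cat_quotient act L p -> bijective (fun w : Mor Q Y => w *+ n) ->
  cat_invariant act L f -> exists u : Mor Q Y, (u \oc p) *+ n = f.
Proof.
case=> _ univ [div divK mulK] /univ[w [wp _]].
by exists (div w); rewrite -compMnl mulK.
Qed.

Hypothesis actP : is_cat_action act.

Definition coset_sum (L K : {set gT}) Y (f : Mor X Y) :=
  \sum_(c in rcosets L K) f \oc act (repr c).

Lemma comp_coset_sum (L K : {set gT}) Y Y' (u : Mor Y Y') (f : Mor X Y) :
  u \oc coset_sum L K f = coset_sum L K (u \oc f).
Proof. by rewrite comp_sumr; apply: eq_bigr => c _; rewrite Defs.compA. Qed.

Lemma coset_sum_invariant L K Y (f : Mor X Y) :
  cat_invariant act L f -> cat_invariant act K (coset_sum L K f).
Proof.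
move=> fL k kK; have fLact l x : l \in L -> f \oc act (l * x)%g = f \oc act x.
  by move=> lL; rewrite actP.2 Defs.compA fL.
rewrite comp_suml; apply: etrans (sum_rcosets_mulr fLact kK).
by apply: eq_bigr => c _; rewrite -Defs.compA actP.2.
Qed.

Lemma coset_sum_const L K Y (f : Mor X Y) :
  L \subset K -> cat_invariant act K f -> coset_sum L K f = f *+ #|K : L|%g.
Proof.
move=> sLK fK; rewrite -sumr_const; apply: eq_bigr => c cLK.
exact/fK/(repr_rcosets_in sLK).
Qed.

End CategoricalQuotients.

Section SplitFork.
Variables (C : AddCat) (gT : finGroupType) (X : C) (act : gT -> Mor X X)
  (H : {group gT}) (Q : {group gT} -> C) (p : forall L : {group gT}, Mor X (Q L))
  (S : C) (inj : forall g : gT, Mor (Q (H :&: H :^ g)%G) S)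
  (pr : forall g : gT, Mor S (Q (H :&: H :^ g)%G))
  (d0 d1 : Mor S (Q H)) (e : Mor (Q H) (Q [set: gT]%G)).

Hypothesis actP : is_cat_action act.
Hypothesis quotP : forall L : {group gT}, is_cat_quotient act L (p L).
Hypothesis d0P : forall g, (d0 \oc inj g) \oc p (H :&: H :^ g)%G = p H.
Hypothesis d1P : forall g, (d1 \oc inj g) \oc p (H :&: H :^ g)%G = p H \oc act g.
Hypothesis eP : e \oc p H = p [set: gT]%G.

Lemma split_fork_eq : is_biproduct inj pr -> e \oc d0 = e \oc d1.
Proof.
case=> _ _ inj_pr; rewrite -(compm1 d0) -(compm1 d1) -inj_pr !comp_sumr.
apply: eq_bigr => g _; rewrite !Defs.compA; congr (_ \oc pr g).
apply: (cat_quotient_epi (quotP _)); rewrite -!Defs.compA.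
rewrite [d0 \oc _]Defs.compA d0P [d1 \oc _]Defs.compA d1P Defs.compA eP.
by rewrite (quotP _).1 ?inE.
Qed.

Let n := #|[set: gT] : H|%g.
Hypothesis mulrn_bij : forall A B : C, bijective (fun f : Mor A B => f *+ n).

Let average := coset_sum act H [set: gT] (p H).

Let contraction_lift := \sum_(g in dcoset_reprs H)
  inj g \oc coset_sum act (H :&: H :^ g)%g H (p (H :&: H :^ g)%G).

Lemma split_fork_section_exists :
  exists s : Mor (Q [set: gT]%G) (Q H), (s \oc p [set: gT]%G) *+ n = average.
Proof.
apply: cat_quotient_lift_mulrn (quotP _) (mulrn_bij _ _) _.
exact/coset_sum_invariant/(quotP _).1.
Qed.

Lemma split_fork_contraction_exists :
  exists t : Mor (Q H) S, (t \oc p H) *+ n = contraction_lift.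
Proof.
apply: cat_quotient_lift_mulrn (quotP _) (mulrn_bij _ _) _.
apply: cat_invariant_sum => g _; apply: cat_invariant_comp.
exact/coset_sum_invariant/(quotP _).1.
Qed.

Lemma split_fork_retraction s :
  (s \oc p [set: gT]%G) *+ n = average -> e \oc s = Defs.idm _.
Proof.
move=> sP; apply: (cat_quotient_eq_mulrn (quotP _) (bij_inj (mulrn_bij _ _))).
rewrite -Defs.compA -compMnr sP comp_coset_sum eP comp1m.
by rewrite coset_sum_const ?subsetT //; apply: (quotP _).1.
Qed.

Lemma split_fork_d0_contraction t :
  (t \oc p H) *+ n = contraction_lift -> d0 \oc t = Defs.idm _.
Proof.
move=> tP; apply: (cat_quotient_eq_mulrn (quotP _) (bij_inj (mulrn_bij _ _))).
rewrite -Defs.compA -compMnr tP comp_sumr comp1m /n -sum_indexg_dcoset_reprs -sumrMnr.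
apply: eq_bigr => g _; rewrite Defs.compA comp_coset_sum d0P.
by rewrite coset_sum_const ?subsetIl //; apply: (quotP _).1.
Qed.

Lemma split_fork_d1_contraction s t :
    (s \oc p [set: gT]%G) *+ n = average -> (t \oc p H) *+ n = contraction_lift ->
  d1 \oc t = s \oc e.
Proof.
move=> sP tP; apply: (cat_quotient_eq_mulrn (quotP _) (bij_inj (mulrn_bij _ _))).
rewrite -!Defs.compA eP -[LHS]compMnr -[RHS]compMnr tP compMnr sP comp_sumr.
have pHact h x : h \in H -> p H \oc act (h * x)%g = p H \oc act x.
  by move=> hH; rewrite actP.2 Defs.compA (quotP _).1.
apply: etrans (sum_mackey pHact); apply: eq_bigr => g _.
rewrite Defs.compA comp_coset_sum d1P; apply: eq_bigr => c _.
by rewrite -Defs.compA actP.2.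
Qed.

End SplitFork.

Theorem mainTheorem13 (C : AddCat) (gT : finGroupType) (X : C)
    (act : gT -> Mor X X) (H : {group gT})
    (Q : {group gT} -> C) (p : forall L : {group gT}, Mor X (Q L))
    (S : C)
    (inj : forall g : gT, Mor (Q (H :&: H :^ g)%G) S)
    (pr : forall g : gT, Mor S (Q (H :&: H :^ g)%G))
    (d0 d1 : Mor S (Q H)) (e : Mor (Q H) (Q [set: gT]%G)) :
  is_cat_action act ->
  (forall A B : C, bijective (fun f : Mor A B => f *+ #|[set: gT] : H|%g)) ->
  (forall L : {group gT}, is_cat_quotient act L (p L)) ->
  is_biproduct inj pr ->
  (forall g : gT, (d0 \oc inj g) \oc p (H :&: H :^ g)%G = p H) ->
  (forall g : gT, (d1 \oc inj g) \oc p (H :&: H :^ g)%G = p H \oc act g) ->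
  e \oc p H = p [set: gT]%G ->
  split_fork d0 d1 e.
Proof.
move=> actP mulrn_bij quotP biprodP d0P d1P eP.
split; first exact: split_fork_eq quotP d0P d1P eP biprodP.
have [s sP] := split_fork_section_exists actP quotP mulrn_bij.
have [t tP] := split_fork_contraction_exists inj actP quotP mulrn_bij.
exists s, t; split.
- exact (split_fork_retraction quotP eP mulrn_bij sP).
- exact (split_fork_d0_contraction quotP d0P mulrn_bij tP).
- exact (split_fork_d1_contraction actP quotP d1P eP mulrn_bij sP tP).
Qed.
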